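(* Let $\mathcal C$ be a small upper-triangular linear category. Then for all $i\ge0$ $$\operatorname{HH}_i(\mathcal C)\cong\bigoplus_{x\in\operatorname{Ob}(\mathcal C)}\operatorname{HH}_i(\mathcal C(x,x)),$$ where $\operatorname{HH}_i(\mathcal C(x,x))$ is the Hochschild homology of the endomorphism ring $\mathcal C(x,x)$.
   Context: A small linear category $\mathcal C$ is upper-triangular if there is a partial order $\le$ on $\operatorname{Ob}(\mathcal C)$ such that $\mathcal C(x,y)\neq0$ implies $x\le y$. The Hochschild–Mitchell complex of $\mathcal C$ has $C_n=\bigoplus_{x_0,\dots,x_n\in\operatorname{Ob}(\mathcal C)}\mathcal C(x_n,x_0)\otimes\mathcal C(x_{n-1},x_n)\otimes\dots\otimes\mathcal C(x_0,x_1)$ (tensor over $\mathbb Z$) with differential $d_n(f_n\otimes\dots\otimes f_0)=\sum_{i=0}^{n-1}(-1)^i f_n\otimes\dots\otimes f_{n-i}f_{n-i-1}\otimes\dots\otimes f_0+(-1)^n f_0f_n\otimes f_{n-1}\otimes\dots\otimes f_1$; $\operatorname{HH}_*(\mathcal C)$ is its homology. For a ring $R$ (a one-object linear category), this is the usual Hochschild complex $C_n(R)=R^{\otimes n+1}$. *)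

From HB Require Import structures.
From mathcomp Require Import all_boot all_algebra.
Import GRing.Theory.

(* Small (Z-)linear categories: hom-sets are abelian groups (zmodType) *)
(* and composition is biadditive.  comp x y z g f = g o f : x -> z.    *)
Record linCat := LinCat {
  Ob : eqType;
  Hom : Ob -> Ob -> zmodType;
  comp : forall x y z : Ob, Hom y z -> Hom x y -> Hom x z;
  idm : forall x : Ob, Hom x x;
  comp_assoc : forall (w x y z : Ob) (h : Hom y z) (g : Hom x y) (f : Hom w x),
      comp w y z h (comp w x y g f) = comp w x z (comp x y z h g) f;
  comp_idl : forall (x y : Ob) (f : Hom x y), comp x y y (idm y) f = f;
  comp_idr : forall (x y : Ob) (f : Hom x y), comp x x y f (idm x) = f;
  comp_addl : forall (x y z : Ob) (g g' : Hom y z) (f : Hom x y),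
      comp x y z (g + g')%R f = (comp x y z g f + comp x y z g' f)%R;
  comp_addr : forall (x y z : Ob) (g : Hom y z) (f f' : Hom x y),
      comp x y z g (f + f')%R = (comp x y z g f + comp x y z g f')%R
}.

Definition upper_triangular (C : linCat) : Prop :=
  exists le : Ob C -> Ob C -> Prop,
    (forall x, le x x) /\
    (forall x y, le x y -> le y x -> x = y) /\
    (forall x y z, le x y -> le y z -> le x z) /\
    (forall (x y : Ob C) (f : Hom C x y), f <> 0%R -> le x y).

(* The endomorphism ring C(x,x), viewed as a one-object linear category. *)
Definition endCat (C : linCat) (x : Ob C) : linCat :=
  @LinCat (unit : eqType) (fun _ _ => Hom C x x)
    (fun _ _ _ => comp C x x x) (fun _ => idm C x)
    (fun _ _ _ _ => comp_assoc C x x x x)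
    (fun _ _ => comp_idl C x x)
    (fun _ _ => comp_idr C x x)
    (fun _ _ _ => comp_addl C x x x)
    (fun _ _ _ => comp_addr C x x x).

(* Abelian groups presented "setoid style": a carrier, an equality,    *)
Record sgroup := SGroup {
  sg_car : Type;
  sg_eqv : sg_car -> sg_car -> Prop;
  sg_zero : sg_car;
  sg_add : sg_car -> sg_car -> sg_car
}.

Definition sg_iso (A B : sgroup) : Prop :=
  exists f : sg_car A -> sg_car B,
    (forall a a', sg_eqv A a a' -> sg_eqv B (f a) (f a')) /\
    (forall a a', sg_eqv B (f (sg_add A a a')) (sg_add B (f a) (f a'))) /\
    (forall a a', sg_eqv B (f a) (f a') -> sg_eqv A a a') /\
    (forall b, exists a, sg_eqv B (f a) b).

(* Direct sum of a family of groups indexed by an eqType (finite support). *)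
Section DirectSum.
Variables (I : eqType) (G : I -> sgroup).

Definition dsum_at (x : I) (e : {i : I & sg_car (G i)}) : seq (sg_car (G x)) :=
  match tag e =P x with
  | ReflectT h => [:: ecast i (sg_car (G i)) h (tagged e)]
  | ReflectF _ => [::]
  end.

Definition dsum_comp (x : I) (s : seq {i : I & sg_car (G i)}) : sg_car (G x) :=
  foldr (sg_add (G x)) (sg_zero (G x)) (flatten (map (dsum_at x) s)).

Definition dsum : sgroup :=
  @SGroup (seq {i : I & sg_car (G i)})
    (fun s t => forall x, sg_eqv (G x) (dsum_comp x s) (dsum_comp x t))
    [::] (fun s t => s ++ t).
End DirectSum.
Arguments dsum {I}.

(* Free abelian group on T modulo relations R: formal sums are lists of  *)
(* signed generators (true = minus sign).                                *)
Inductive feq {T : Type} (R : seq (bool * T) -> seq (bool * T) -> Prop) :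
    seq (bool * T) -> seq (bool * T) -> Prop :=
| feq_refl s : feq R s s
| feq_sym s t : feq R s t -> feq R t s
| feq_trans s t u : feq R s t -> feq R t u -> feq R s u
| feq_cat s1 s2 t1 t2 : feq R s1 t1 -> feq R s2 t2 -> feq R (s1 ++ s2) (t1 ++ t2)
| feq_comm s t : feq R (s ++ t) (t ++ s)
| feq_inv b x : feq R [:: (b, x); (~~ b, x)] [::]
| feq_rel s t : R s t -> feq R s t.

Arguments feq_cat {T R s1 s2 t1 t2}.
Arguments feq_refl {T R}.

Definition fneg {T : Type} (s : seq (bool * T)) : seq (bool * T) :=
  [seq (~~ p.1, p.2) | p <- s].

(* A generator f_n (x) f_{n-1} (x) ... (x) f_0 is the list             *)
(* [:: f_n; f_{n-1}; ...; f_0] of arrows, f_n : x_n -> x_0 and         *)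
(* f_i : x_i -> x_{i+1} (i < n), i.e. a cyclically composable list.     *)
Section HM.
Variable C : linCat.

Record arrow := Arr { asrc : Ob C; atgt : Ob C; amor : Hom C asrc atgt }.
Arguments Arr {asrc atgt}.

(* g o h (when composable; junk otherwise, never used on valid data) *)
Definition comp_arr (g h : arrow) : arrow :=
  match atgt h =P asrc g with
  | ReflectT e =>
      @Arr (asrc h) (atgt g)
        (comp C (asrc h) (asrc g) (atgt g) (amor g)
           (ecast y (Hom C (asrc h) y) e (amor h)))
  | ReflectF _ => g
  end.

Definition cyc (l : seq arrow) : bool :=
  cycle (fun g h => asrc g == atgt h) l.

Definition hgen := seq arrow.
Definition hchain := seq (bool * hgen).

(* i-th face, i < n : f_n (x) .. (x) f_{n-i} f_{n-i-1} (x) .. (x) f_0 *)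
Fixpoint face (i : nat) (l : hgen) : hgen :=
  match i, l with
  | 0, g :: h :: t => comp_arr g h :: t
  | i'.+1, g :: t => g :: face i' t
  | _, _ => l
  end.

(* last face : f_0 f_n (x) f_{n-1} (x) ... (x) f_1 *)
Definition cface (l : hgen) : hgen :=
  match l with
  | g :: rest => comp_arr (last g rest) g :: take (size rest).-1 rest
  | [::] => [::]
  end.

Definition dgen (n : nat) (l : hgen) : hchain :=
  if n is 0 then [::] else
  if cyc l && (size l == n.+1) then
    [seq (odd i, face i l) | i <- iota 0 n] ++ [:: (odd n, cface l)]
  else [::].

Definition hd (n : nat) (c : hchain) : hchain :=
  flatten [seq [seq (p.1 (+) q.1, q.2) | q <- dgen n p.2] | p <- c].

(* Relations presenting C_n = (+)_{x_0..x_n} C(x_n,x_0) (x) ... (x) C(x_0,x_1) *)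
Inductive hrel (n : nat) : hchain -> hchain -> Prop :=
| hrel_bad l : ~~ (cyc l && (size l == n.+1)) -> hrel n [:: (false, l)] [::]
| hrel_lin (l1 l2 : hgen) (x y : Ob C) (a b : Hom C x y) :
    hrel n [:: (false, l1 ++ Arr (a + b)%R :: l2)]
           [:: (false, l1 ++ Arr a :: l2); (false, l1 ++ Arr b :: l2)].

Definition ceqv (n : nat) : hchain -> hchain -> Prop := feq (hrel n).

Definition is_cycle (n : nat) (c : hchain) : Prop := ceqv n.-1 (hd n c) [::].

Lemma hd_cat n a b : hd n (a ++ b) = hd n a ++ hd n b.
Proof. by rewrite /hd map_cat flatten_cat. Qed.

Lemma is_cycle_cat n a b : is_cycle n a -> is_cycle n b -> is_cycle n (a ++ b).
Proof. by move=> Ha Hb; rewrite /is_cycle hd_cat; have /= := feq_cat Ha Hb. Qed.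

Lemma is_cycle_nil n : is_cycle n [::].
Proof. exact: feq_refl. Qed.

Definition hcyc (n : nat) := {c : hchain | is_cycle n c}.

Definition HH (n : nat) : sgroup :=
  @SGroup (hcyc n)
    (fun a b => exists b' : hchain,
        ceqv n (proj1_sig a ++ fneg (proj1_sig b)) (hd n.+1 b'))
    (exist _ [::] (is_cycle_nil n))
    (fun a b => exist _ (proj1_sig a ++ proj1_sig b)
                  (@is_cycle_cat n _ _ (proj2_sig a) (proj2_sig b))).
End HM.

From Pilot Require Import Defs.
From HB Require Import structures.
From mathcomp Require Import all_boot all_algebra.
Import GRing.Theory.

(* A nonzero arrow x -> y forces x <= y, so in a generator f_n (x) ... (x) f_0
   with all factors nonzero the objects x_0, x_n, ..., x_1, x_0 decrease around
   a closed cycle and antisymmetry makes them all equal. Generators with a zero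
   factor vanish, hence the Hochschild-Mitchell complex is the direct sum over
   x of the Hochschild complexes of C(x,x): projecting onto the generators
   living at x is a chain map, it is a left inverse of the inclusion, and every
   chain is the sum of the inclusions of its projections. *)

Arguments feq_sym {T R s t}.
Arguments feq_trans {T R s t u}.

Section FormalSums.
Context {T : Type} {R : seq (bool * T) -> seq (bool * T) -> Prop}.
Local Notation fq := (feq R).

Lemma feq_catl {s t u} : fq t u -> fq (s ++ t) (s ++ u).
Proof. by move=> H; apply: feq_cat => //; apply: feq_refl. Qed.

Lemma feq_catr {s t u} : fq t u -> fq (t ++ s) (u ++ s).
Proof. by move=> H; apply: feq_cat => //; apply: feq_refl. Qed.

Lemma feq_cat0 s t : fq s [::] -> fq t [::] -> fq (s ++ t) [::].
Proof. by move=> Hs Ht; have := feq_cat Hs Ht. Qed.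

Lemma feq_cat_fneg s : fq (s ++ fneg s) [::].
Proof.
elim: s => [|[b x] s IH] /=; first exact: feq_refl.
have -> : (b, x) :: s ++ (~~ b, x) :: fneg s
    = [:: (b, x)] ++ (s ++ [:: (~~ b, x)]) ++ fneg s by rewrite /= -catA.
apply: feq_trans (feq_catl (feq_catr (feq_comm R _ _))) _.
by have := feq_cat (feq_inv R b x) IH.
Qed.

Lemma feq_fneg {s t} : fq s t -> fq (fneg s) (fneg t).
Proof.
move=> H.
apply: (@feq_trans _ R _ (fneg s ++ (t ++ fneg t))).
  rewrite -{1}[fneg s]cats0; apply: feq_catl; apply: feq_sym; exact: feq_cat_fneg.
apply: (@feq_trans _ R _ (fneg s ++ (s ++ fneg t))).
  by apply: feq_catl; apply: feq_catr; apply: feq_sym.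
rewrite catA; apply: feq_catr (feq_trans (feq_comm R _ _) (feq_cat_fneg s)).
Qed.

Lemma feq_fneg0 s : fq s [::] -> fq (fneg s) [::].
Proof. exact: feq_fneg. Qed.

Lemma fneg_flatten {I : Type} (f : I -> seq (bool * T)) c :
  fneg (flatten (map f c)) = flatten [seq fneg (f i) | i <- c].
Proof. by elim: c => //= i c <-; rewrite /fneg map_cat. Qed.

Lemma feq_flatten_in {I : Type} (P : pred I) (f g : I -> seq (bool * T)) c :
  all P c -> (forall i, P i -> fq (f i) (g i)) ->
  fq (flatten (map f c)) (flatten (map g c)).
Proof.
move=> hc H; elim: c hc => [|i c IH] /=; first by move=> _; exact: feq_refl.
by case/andP=> h1 h2; apply: feq_cat; [apply: H|apply: IH].
Qed.

Lemma feq_flatten {I : Type} (f g : I -> seq (bool * T)) c :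
  (forall i, fq (f i) (g i)) -> fq (flatten (map f c)) (flatten (map g c)).
Proof. by move=> H; apply: (feq_flatten_in predT) => //; exact: all_predT. Qed.

Lemma feq_flatten0 {I : Type} (f : I -> seq (bool * T)) c :
  (forall i, fq (f i) [::]) -> fq (flatten (map f c)) [::].
Proof. by move=> H; elim: c => [|i c IH] /=; [exact: feq_refl|exact: feq_cat0]. Qed.

Lemma feq_flatten_interleave {I : Type} (u v : I -> seq (bool * T)) ys :
  fq (flatten [seq u y ++ v y | y <- ys]) (flatten (map u ys) ++ flatten (map v ys)).
Proof.
elim: ys => [|y ys IH] /=; first exact: feq_refl.
rewrite -!catA; apply: feq_catl.
apply: feq_trans (feq_catl IH) _.
by rewrite !catA; apply: feq_catr; exact: feq_comm.
Qed.

Lemma feq_flatten_exchange {I J : Type} (f : I -> J -> seq (bool * T)) xs c :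
  fq (flatten [seq flatten [seq f x p | p <- c] | x <- xs])
     (flatten [seq flatten [seq f x p | x <- xs] | p <- c]).
Proof.
elim: c => [|p c IH] /=.
  by elim: xs => [|x xs IH] //=; exact: feq_refl.
apply: feq_trans (feq_flatten_interleave (f^~ p) (fun x => flatten [seq f x q | q <- c]) xs) _.
exact: feq_catl.
Qed.

Definition fsign (b : bool) (c : seq (bool * T)) : seq (bool * T) :=
  [seq (b (+) q.1, q.2) | q <- c].

Lemma feq_fsign0 b s : fq s [::] -> fq (fsign b s) [::].
Proof.
have fsign_false c : fsign false c = c by elim: c => //= [[c y] c' ->].
by case: b; rewrite ?fsign_false //; exact: feq_fneg0.
Qed.

End FormalSums.

Arguments asrc {C} _.
Arguments atgt {C} _.
Arguments amor {C} _.

Section ChainsOfLinearCategory.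
Variable C : linCat.
Local Notation Hom := (Defs.Hom C).
Local Notation cmp := (Defs.comp C).

Lemma comp0r x y z (g : Hom y z) : cmp x y z g 0%R = 0%R.
Proof. by apply: (@addrI _ (cmp x y z g 0%R)); rewrite addr0 -comp_addr addr0. Qed.

Lemma comp0l x y z (f : Hom x y) : cmp x y z 0%R f = 0%R.
Proof. by apply: (@addrI _ (cmp x y z 0%R f)); rewrite addr0 -comp_addl addr0. Qed.

Definition zero_arrow (a : arrow C) : bool := amor a == 0%R.
Definition loop_at (z : Ob C) (a : arrow C) : bool := (asrc a == z) && (atgt a == z).
Definition composable (g h : arrow C) : bool := asrc g == atgt h.

Lemma hd_cons n p c : hd C n (p :: c) = fsign p.1 (dgen C n p.2) ++ hd C n c.
Proof. by []. Qed.

Lemma hd0 c : hd C 0 c = [::].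
Proof. by elim: c => // p c IH; rewrite hd_cons IH. Qed.

Lemma hd_flatten n (cs : seq (hchain C)) : hd C n (flatten cs) = flatten (map (hd C n) cs).
Proof. by elim: cs => //= c cs IH; rewrite hd_cat IH. Qed.

Lemma hd_flatten1 n c : hd C n c = flatten [seq hd C n [:: p] | p <- c].
Proof. by elim: c => //= p c IH; rewrite hd_cons IH hd_cons cats0. Qed.

Lemma ceqv_zero_factor n b l1 l2 s t :
  ceqv C n [:: (b, l1 ++ Arr C s t 0%R :: l2)] [::].
Proof.
set g := l1 ++ _ :: _.
have g0 : ceqv C n [:: (false, g)] [::].
  have g2 := feq_rel (hrel C n) _ _ (hrel_lin C n l1 l2 s t 0 0); rewrite addr0 in g2.
  apply: feq_sym; apply: feq_trans (feq_sym (feq_cat_fneg [:: (false, g)])) _.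
  apply: (@feq_trans _ _ _ ([:: (false, g)] ++ [:: (false, g)] ++ fneg [:: (false, g)])).
    by rewrite catA; apply: feq_catr; exact: g2.
  by rewrite -[X in feq _ _ X]cats0; apply: feq_catl; exact: feq_cat_fneg.
by case: b; [exact: feq_fneg0 g0|].
Qed.

Lemma ceqv_invalid n b l : ~~ (cyc C l && (size l == n.+1)) -> ceqv C n [:: (b, l)] [::].
Proof.
move=> hl; have l0 : ceqv C n [:: (false, l)] [::] by apply: feq_rel; exact: hrel_bad.
by case: b; [exact: feq_fneg0 l0|].
Qed.

Lemma split_zero_arrow l : has zero_arrow l ->
  exists l1 s t l2, l = l1 ++ Arr C s t 0%R :: l2.
Proof.
elim: l => [|[s t f] l IH] //=; case/orP.
  by rewrite /zero_arrow /= => /eqP ->; exists [::], s, t, l.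
by case/IH=> l1 [s' [t' [l2 ->]]]; exists (Arr C s t f :: l1), s', t', l2.
Qed.

Lemma ceqv_has_zero n b l : has zero_arrow l -> ceqv C n [:: (b, l)] [::].
Proof. by case/split_zero_arrow=> l1 [s [t [l2 ->]]]; exact: ceqv_zero_factor. Qed.

Lemma HH_eqv_ceqv n (a b : hcyc C n) :
  ceqv C n (proj1_sig a) (proj1_sig b) -> sg_eqv (HH C n) a b.
Proof. by move=> H; exists [::]; exact: feq_trans (feq_catr H) (feq_cat_fneg _). Qed.

Lemma comp_arr_zero g h :
  composable g h -> zero_arrow g || zero_arrow h -> zero_arrow (comp_arr C g h).
Proof.
case: g h => [sg tg fg] [sh th fh]; rewrite /composable /zero_arrow /comp_arr /= => /eqP H.
subst sg; case: eqP => //= e; rewrite (eq_irrelevance e erefl) /=.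
by case/orP=> /eqP ->; rewrite ?comp0l ?comp0r.
Qed.

Lemma sorted_cycle (T : Type) (e : rel T) l : cycle e l -> sorted e l.
Proof. by case: l => //= x p; rewrite rcons_path => /andP[]. Qed.

Lemma face_has_zero i l : sorted composable l -> has zero_arrow l -> has zero_arrow (face C i l).
Proof.
elim: l i => [|g t IH] [|i] //=.
  case: t IH => [|h t'] //= _ /andP[egh _].
  case/orP=> [z|/orP[z|->]]; last by rewrite orbT.
    by rewrite comp_arr_zero ?z.
  by rewrite comp_arr_zero ?z ?orbT.
move=> st /orP[->//|ht]; rewrite IH ?orbT //.
exact: path_sorted st.
Qed.

Lemma cface_has_zero l : cycle composable l -> has zero_arrow l -> has zero_arrow (cface C l).
Proof.
case: l => //= g t; rewrite rcons_path => /andP[_ el].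
case/orP=> [z|ht]; first by rewrite comp_arr_zero ?z ?orbT.
case/lastP: t el ht => [|r y] //=; rewrite last_rcons size_rcons /= => el.
rewrite -cats1 has_cat /= orbF => /orP[hr|zy].
  by rewrite take_size_cat // hr orbT.
by rewrite comp_arr_zero ?zy.
Qed.

Lemma comp_arr_loop z g h : loop_at z g -> loop_at z h -> loop_at z (comp_arr C g h).
Proof.
case: g h => [sg tg fg] [sh th fh]; rewrite /loop_at /comp_arr /=.
by case: eqP => e /andP[a b] /andP[c d]; rewrite /= ?a ?b ?c ?d.
Qed.

Lemma face_all_loop z i l : all (loop_at z) l -> all (loop_at z) (face C i l).
Proof.
elim: l i => [|g t IH] [|i] //=.
  by case: t IH => [|h t'] //= _ /and3P[zg zh ->]; rewrite comp_arr_loop.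
by move=> /andP[-> /IH ->].
Qed.

Lemma cface_all_loop z l : all (loop_at z) l -> all (loop_at z) (cface C l).
Proof.
case: l => //= g t /andP[zg zt].
rewrite comp_arr_loop //; last first.
  by case/lastP: t zt => //= r y; rewrite last_rcons all_rcons => /andP[].
by move: zt; rewrite -{1}(cat_take_drop (size t).-1 t) all_cat => /andP[].
Qed.

Lemma size_face i l : i < (size l).-1 -> size (face C i l) = (size l).-1.
Proof.
elim: l i => [|g t IH] [|i] //=; first by case: t IH.
by case: t IH => [|h t] //= IH hi; rewrite IH.
Qed.

Lemma size_cface l : 1 < size l -> size (cface C l) = (size l).-1.
Proof.
case: l => //= g [|h t] //= _; rewrite size_take /=.
by case: (size t) => //= k; rewrite ltnSn.
Qed.

End ChainsOfLinearCategory.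
Arguments zero_arrow {C} a.
Arguments loop_at {C} z a.
Arguments composable {C} g h.

Lemma flatten_if_pred1 {A : eqType} {T : Type} (xs : seq A) (P : pred A) (z : A) (X : seq T) :
  uniq xs -> (forall y, P y -> y = z) ->
  flatten [seq if P y then X else [::] | y <- xs] = if (z \in xs) && P z then X else [::].
Proof.
move=> + hP; elim: xs => //= y ys IH /andP[yn u]; rewrite IH // in_cons.
case: ifP => Py.
  by have ey := hP _ Py; subst y; rewrite eqxx (negbTE yn) /= Py cats0.
by case: eqP => [ey|_] //=; subst y; rewrite (negbTE yn) Py.
Qed.

Section DirectSumComponents.
Variables (I : eqType) (G : I -> sgroup).

Lemma dsum_at_eq y (v : sg_car (G y)) : dsum_at I G y (existT _ y v) = [:: v].
Proof. by rewrite /dsum_at; case: eqP => //= e; rewrite (eq_irrelevance e erefl). Qed.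

Lemma dsum_at_ne y z (v : sg_car (G z)) : z != y -> dsum_at I G y (existT _ z v) = [::].
Proof. by move=> zy; rewrite /dsum_at; case: eqP => //= e; rewrite e eqxx in zy. Qed.

End DirectSumComponents.

Section DirectSumOfHH.
Variables (I : eqType) (D : I -> linCat) (i : nat).
Local Notation HHD := (fun y => HH (D y) i).

Lemma sval_dsum_comp y s :
  proj1_sig (dsum_comp I HHD y s) =
  flatten [seq flatten (map (@proj1_sig _ _) (dsum_at I HHD y e)) | e <- s].
Proof.
have sval_foldr L : proj1_sig (foldr (sg_add (HHD y)) (sg_zero (HHD y)) L) =
    flatten (map (@proj1_sig _ _) L) by elim: L => //= a L ->.
rewrite /dsum_comp sval_foldr.
by elim: s => //= e s IH; rewrite map_cat flatten_cat IH.
Qed.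

Lemma sval_dsum_comp_cat y s t :
  proj1_sig (dsum_comp I HHD y (s ++ t)) =
  proj1_sig (dsum_comp I HHD y s) ++ proj1_sig (dsum_comp I HHD y t).
Proof. by rewrite !sval_dsum_comp map_cat flatten_cat. Qed.

End DirectSumOfHH.

Section Endomorphisms.
Variable C : linCat.

Section AtObject.
Variable x : Ob C.
Local Notation E := (endCat C x).

Definition incl_arrow (a : arrow E) : arrow C := Arr C x x (amor a).

Definition end_hom {s t} (f : Defs.Hom C s t) : Defs.Hom C x x :=
  match s =P x, t =P x with
  | ReflectT e1, ReflectT e2 =>
      ecast u (Defs.Hom C u x) e1 (ecast v (Defs.Hom C s v) e2 f)
  | _, _ => 0%R
  end.

Definition proj_arrow (a : arrow C) : arrow E := Arr E tt tt (end_hom (amor a)).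

Lemma end_hom_id (f : Defs.Hom C x x) : end_hom f = f.
Proof.
rewrite /end_hom; case: (x =P x) => [e|/(_ erefl)//].
by rewrite (eq_irrelevance e erefl).
Qed.

Lemma end_hom0 s t : @end_hom s t 0%R = 0%R.
Proof. by rewrite /end_hom; case: eqP => // e1; case: eqP => // e2; subst. Qed.

Lemma end_homD s t (f g : Defs.Hom C s t) : end_hom (f + g)%R = (end_hom f + end_hom g)%R.
Proof.
rewrite /end_hom; case: eqP => [e1|_]; last by rewrite addr0.
by case: eqP => [e2|_]; [subst|rewrite addr0].
Qed.

Lemma incl_arrowK : cancel incl_arrow proj_arrow.
Proof. by case=> [[] [] f]; rewrite /proj_arrow /incl_arrow /= end_hom_id. Qed.

Lemma proj_arrowK a : loop_at x a -> incl_arrow (proj_arrow a) = a.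
Proof.
case: a => s t f; rewrite /loop_at /= => /andP[/eqP e1 /eqP e2]; subst.
by rewrite /incl_arrow /proj_arrow /= end_hom_id.
Qed.

Lemma map_incl_arrowK : cancel (map incl_arrow) (map proj_arrow).
Proof. exact/mapK/incl_arrowK. Qed.

Lemma map_proj_arrowK l : all (loop_at x) l -> map incl_arrow (map proj_arrow l) = l.
Proof. by elim: l => //= a l IH /andP[h1 h2]; rewrite IH // proj_arrowK. Qed.

Lemma all_loop_incl (l : hgen E) : all (loop_at x) (map incl_arrow l).
Proof. by elim: l => //= a l ->; rewrite /loop_at /= eqxx. Qed.

Lemma zero_arrow_proj a : zero_arrow a -> zero_arrow (proj_arrow a).
Proof. by case: a => s t f; rewrite /zero_arrow /= => /eqP ->; rewrite end_hom0. Qed.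

Lemma comp_arr_incl g h : comp_arr C (incl_arrow g) (incl_arrow h) = incl_arrow (comp_arr E g h).
Proof.
case: g h => [[] [] fg] [[] [] fh].
rewrite /comp_arr /incl_arrow /=; case: eqP => // e; rewrite (eq_irrelevance e erefl) /=.
by case: eqP => // e'; rewrite (eq_irrelevance e' erefl).
Qed.

Lemma face_incl i l : face C i (map incl_arrow l) = map incl_arrow (face E i l).
Proof.
elim: l i => [|g t IH] [|i] //=; last by rewrite IH.
by case: t IH => [|h t] //= _; rewrite comp_arr_incl.
Qed.

Lemma cface_incl l : cface C (map incl_arrow l) = map incl_arrow (cface E l).
Proof. by case: l => //= g t; rewrite last_map comp_arr_incl size_map map_take. Qed.

Lemma cyc_end (l : hgen E) : cyc E l.
Proof.
case: l => //= g t.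
suff all_path a s : path (fun g h : arrow E => asrc g == atgt h) a s by [].
by elim: s a => //= b s IH a; rewrite IH.
Qed.

Lemma cyc_loop l : all (loop_at x) l -> cyc C l.
Proof.
move/map_proj_arrowK <-; case: (map _ l) => //= g t; rewrite -map_rcons path_map.
suff all_path a s : path (relpre incl_arrow (fun g h : arrow C => asrc g == atgt h)) a s by [].
by elim: s a => //= b s IH a; rewrite IH andbT /relpre /= eqxx.
Qed.

Definition incl_chain (c : hchain E) : hchain C := [seq (p.1, map incl_arrow p.2) | p <- c].

Lemma incl_chain_cat a b : incl_chain (a ++ b) = incl_chain a ++ incl_chain b.
Proof. exact: map_cat. Qed.

Lemma incl_chain_fneg a : incl_chain (fneg a) = fneg (incl_chain a).
Proof. by rewrite /incl_chain /fneg -!map_comp. Qed.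

Lemma dgen_incl n l : dgen C n (map incl_arrow l) = incl_chain (dgen E n l).
Proof.
rewrite /dgen; case: n => // n; rewrite cyc_loop ?all_loop_incl // cyc_end size_map.
case: ifP => // _; rewrite /incl_chain map_cat -map_comp.
congr (_ ++ _); first by apply: eq_map => i; rewrite /= face_incl.
by rewrite cface_incl.
Qed.

Lemma hd_incl n c : hd C n (incl_chain c) = incl_chain (hd E n c).
Proof.
elim: c => //= [[b l] c IH]; rewrite !hd_cons IH incl_chain_cat dgen_incl.
by rewrite /incl_chain /fsign -!map_comp.
Qed.

Lemma incl_chain_ceqv {n s t} : ceqv E n s t -> ceqv C n (incl_chain s) (incl_chain t).
Proof.
elim=> {s t}.
- move=> s; exact: feq_refl.
- by move=> s t _ H; apply: feq_sym.
- by move=> s t u _ H1 _ H2; apply: feq_trans H1 H2.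
- by move=> s1 s2 t1 t2 _ H1 _ H2; rewrite !incl_chain_cat; apply: feq_cat.
- by move=> s t; rewrite !incl_chain_cat; apply: feq_comm.
- move=> b l; exact: feq_inv.
- move=> s t [l hl|l1 l2 s0 t0 a b].
    apply: feq_rel; apply: hrel_bad; move: hl.
    by rewrite /= cyc_loop ?all_loop_incl // cyc_end size_map.
  by rewrite /incl_chain /= !map_cat /=; apply: feq_rel; exact: (hrel_lin C n _ _ x x a b).
Qed.

Definition proj_gen n (p : bool * hgen C) : hchain E :=
  if (size p.2 == n.+1) && all (loop_at x) p.2 then [:: (p.1, map proj_arrow p.2)] else [::].

Definition proj_chain n (c : hchain C) : hchain E := flatten (map (proj_gen n) c).

Lemma proj_chain_cons n p c : proj_chain n (p :: c) = proj_gen n p ++ proj_chain n c.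
Proof. by []. Qed.

Lemma proj_chain_cat n a b : proj_chain n (a ++ b) = proj_chain n a ++ proj_chain n b.
Proof. by rewrite /proj_chain map_cat flatten_cat. Qed.

Lemma proj_chain_flatten n (cs : seq (hchain C)) :
  proj_chain n (flatten cs) = flatten (map (proj_chain n) cs).
Proof. by elim: cs => //= c cs IH; rewrite proj_chain_cat IH. Qed.

Lemma proj_chain_fsign n b c : proj_chain n (fsign b c) = fsign b (proj_chain n c).
Proof.
elim: c => // [[b' l] c IH]; rewrite /= proj_chain_cons -/(fsign b c) IH.
by rewrite /fsign map_cat; congr (_ ++ _); rewrite /proj_gen /=; case: ifP.
Qed.

Lemma proj_chain_fneg n c : proj_chain n (fneg c) = fneg (proj_chain n c).
Proof. exact: (proj_chain_fsign n true c). Qed.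

Lemma proj_incl_chain m d :
  all (fun q => size q.2 == m.+1) d -> proj_chain m (incl_chain d) = d.
Proof.
elim: d => // [[b l] d IH] /= /andP[hs hd].
by rewrite proj_chain_cons IH // /proj_gen /= size_map hs all_loop_incl map_incl_arrowK.
Qed.

Lemma proj_incl_chain_ceqv n c : ceqv E n (proj_chain n (incl_chain c)) c.
Proof.
elim: c => [|[b l] c IH]; first exact: feq_refl.
rewrite /= proj_chain_cons -cat1s; apply: feq_cat => //.
rewrite /proj_gen /= size_map all_loop_incl andbT map_incl_arrowK.
case: ifP => hs; first exact: feq_refl.
by apply: feq_sym; apply: ceqv_invalid; rewrite hs andbF.
Qed.

Lemma proj_chain_zero m d :
  all (fun q => has zero_arrow q.2) d -> ceqv E m (proj_chain m d) [::].
Proof.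
elim: d => [|[b l] d IH] /=; first by move=> _; apply: feq_refl.
case/andP=> hz hd; rewrite proj_chain_cons; apply: feq_cat0; last exact: IH.
rewrite /proj_gen /=; case: ifP => _; last exact: feq_refl.
by apply: ceqv_has_zero; rewrite has_map; apply: sub_has hz => a; exact: zero_arrow_proj.
Qed.

Lemma proj_chain_off m z d : z != x ->
  all (fun q => all (loop_at z) q.2 && (0 < size q.2)) d -> proj_chain m d = [::].
Proof.
move=> zx; elim: d => [|[b l] d IH] //= /andP[/andP[hz hs] hd].
rewrite proj_chain_cons IH // cats0 /proj_gen /=.
case: l hz hs {hd} => //= a l /andP[/andP[/eqP e1 _] _] _.
by rewrite /loop_at e1 (negbTE zx) andbF.
Qed.

Lemma proj_chain_ceqv {n s t} : ceqv C n s t -> ceqv E n (proj_chain n s) (proj_chain n t).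
Proof.
elim=> {s t}.
- move=> s; exact: feq_refl.
- by move=> s t _ H; apply: feq_sym.
- by move=> s t u _ H1 _ H2; apply: feq_trans H1 H2.
- by move=> s1 s2 t1 t2 _ H1 _ H2; rewrite !proj_chain_cat; apply: feq_cat.
- by move=> s t; rewrite !proj_chain_cat; apply: feq_comm.
- move=> b l; rewrite /proj_chain /= /proj_gen /=; case: ifP => _; last exact: feq_refl.
  exact: feq_inv.
- move=> s t [l hl|l1 l2 s0 t0 a b].
    rewrite /proj_chain /= /proj_gen /=; case: ifP => [/andP[hs ha]|_]; last exact: feq_refl.
    by move: hl; rewrite cyc_loop // hs.
  rewrite /proj_chain /= /proj_gen /= !size_cat /= !all_cat /=.
  case: ifP => _; last exact: feq_refl.
  rewrite !map_cat /= /proj_arrow /= end_homD.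
  apply: feq_rel; exact: hrel_lin.
Qed.

End AtObject.

Definition chain_objs (c : hchain C) : seq (Ob C) := flatten [seq map asrc p.2 | p <- c].

Lemma proj_chain_notin y n c : y \notin chain_objs c -> proj_chain y n c = [::].
Proof.
elim: c => // [[b l] c IH]; rewrite /chain_objs /= mem_cat negb_or => /andP[h1 h2].
rewrite proj_chain_cons IH // cats0 /proj_gen /=.
case: l h1 => //= a l; rewrite in_cons negb_or => /andP[h _].
by rewrite /loop_at [asrc a == y]eq_sym (negbTE h) /= andbF.
Qed.

Lemma proj_incl_chain_ne y z n c : z != y -> proj_chain y n (incl_chain z c) = [::].
Proof.
move=> zy; elim: c => // [[b l] c IH]; rewrite /= proj_chain_cons IH cats0 /proj_gen /=.
by case: l => //= a l; rewrite /loop_at /= (negbTE zy) /= andbF.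
Qed.

Lemma incl_proj_gen y n b (l : hgen C) :
  incl_chain y (proj_gen y n (b, l)) =
  if (size l == n.+1) && all (loop_at y) l then [:: (b, l)] else [::].
Proof.
by rewrite /proj_gen /=; case: ifP => // /andP[_ ha]; rewrite /incl_chain /= map_proj_arrowK.
Qed.


Section UpperTriangular.
Variable le : Ob C -> Ob C -> Prop.
Hypothesis le_refl : forall x, le x x.
Hypothesis le_anti : forall x y, le x y -> le y x -> x = y.
Hypothesis le_trans : forall x y z, le x y -> le y z -> le x z.
Hypothesis le_nonzero : forall (x y : Ob C) (f : Defs.Hom C x y), f <> 0%R -> le x y.

Lemma nonzero_cycle_loop {a0 : arrow C} {s} :
  cycle composable (a0 :: s) -> ~~ has zero_arrow (a0 :: s) ->
  all (loop_at (asrc a0)) (a0 :: s).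
Proof.
rewrite -all_predC => cyc /andP[nz0 nzs].
set L := rcons (a0 :: s) a0.
set o := fun k => asrc (nth a0 L k).
have nzL : all (predC zero_arrow) L by rewrite /L all_rcons /=; apply/and3P.
have edge k : k < (size s).+1 -> composable (nth a0 L k) (nth a0 L k.+1).
  by move=> hk; have := pathP a0 cyc k; rewrite size_rcons => /(_ hk).
have step k : k < (size s).+1 -> le (o k.+1) (o k).
  move=> hk; have /eqP e := edge k hk; rewrite /o e; apply: le_nonzero; apply/eqP.
  by apply: (all_nthP a0 nzL); rewrite /L size_rcons /= ltnS.
have desc i j : i <= j -> j <= (size s).+1 -> le (o j) (o i).
  elim: j => [|j IH]; first by rewrite leqn0 => /eqP ->.
  rewrite leq_eqVlt => /orP[/eqP -> _|hij hj]; first exact: le_refl.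
  exact: le_trans (step j hj) (IH hij (ltnW hj)).
have last_a0 : nth a0 L (size s).+1 = a0 by rewrite /L nth_rcons /= ltnn eqxx.
have o_const k : k <= (size s).+1 -> o k = o 0.
  move=> hk; apply: le_anti; first exact: desc.
  by rewrite -{1}[o 0]/(asrc a0) -last_a0; apply: desc.
apply/(all_nthP a0) => k hk; have -> : nth a0 (a0 :: s) k = nth a0 L k.
  by rewrite /L nth_rcons /= hk.
apply/andP; split; first by apply/eqP; exact: (o_const k (ltnW hk)).
apply/eqP; case: k hk => [|k] hk.
  transitivity (o (size s)); last exact: o_const (size s) (leqnSn _).
  by have /eqP := edge (size s) (ltnSn _); rewrite last_a0 => e; rewrite /o e.
by have /eqP <- := edge k (ltnW hk); exact: (o_const k (ltnW (ltnW hk))).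
Qed.

(* A boundary term of a generator outside the [x]-summand either keeps a zero
   factor or is a loop at another object, so it projects to zero. *)
Lemma proj_chain_hd_gen x n p :
  ceqv (endCat C x) n.-1 (proj_chain x n.-1 (hd C n [:: p])) (hd (endCat C x) n (proj_gen x n p)).
Proof.
case: n => [|m]; first by rewrite !hd0; apply: feq_refl.
case: p => b l; rewrite hd_cons cats0 proj_chain_fsign /proj_gen; cbn [fst snd].
case: ifP => [/andP[hs ha]|hv].
  rewrite hd_cons cats0; cbn [fst snd].
  rewrite -{1}(map_proj_arrowK _ _ ha) dgen_incl proj_incl_chain; first exact: feq_refl.
  set l' := map _ l; have hs' : size l' = m.+2 by rewrite size_map; apply/eqP.
  rewrite /dgen cyc_end hs' eqxx all_cat; apply/andP; split.
    rewrite all_map; apply/allP => i; rewrite mem_iota add0n => /andP[_ hi].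
    by rewrite /preim /= size_face hs'.
  by rewrite /= size_cface ?hs' ?andbT.
apply: feq_fsign0.
rewrite /dgen; case: ifP => [/andP[hc hs]|_]; last exact: feq_refl.
case hz: (has zero_arrow l).
  apply: proj_chain_zero; rewrite all_cat; apply/andP; split.
    rewrite all_map; apply/allP => i _.
    by rewrite /preim /= face_has_zero ?hz // sorted_cycle.
  by rewrite /= cface_has_zero ?hz ?andbT.
case: l hv hc hs hz => // a0 s hv hc hs hz.
have hall := nonzero_cycle_loop hc (negbT hz).
have zx : asrc a0 != x by apply/negP => /eqP e; move: hv; rewrite -e hs hall.
rewrite (@proj_chain_off x _ _ _ zx) ?hs; first exact: feq_refl.
rewrite all_cat; apply/andP; split.
  rewrite all_map; apply/allP => i; rewrite mem_iota add0n => /andP[_ hi].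
  by rewrite /preim /= face_all_loop // size_face (eqP hs).
apply/andP; split => //; apply/andP; split; first exact: cface_all_loop.
by rewrite size_cface ?(eqP hs).
Qed.

Lemma proj_chain_hd x n c :
  ceqv (endCat C x) n.-1 (proj_chain x n.-1 (hd C n c)) (hd (endCat C x) n (proj_chain x n c)).
Proof.
rewrite hd_flatten1 proj_chain_flatten -map_comp /proj_chain hd_flatten -map_comp.
by apply: feq_flatten => p /=; apply: proj_chain_hd_gen.
Qed.

Lemma ceqv_gen_components n xs b (l : hgen C) :
  uniq xs -> all (mem xs) (map asrc l) ->
  ceqv C n [:: (b, l)] (flatten [seq incl_chain y (proj_gen y n (b, l)) | y <- xs]).
Proof.
move=> u hl; case: l hl => [|a0 s] hl.
  suff -> : flatten [seq incl_chain y (proj_gen y n (b, [::])) | y <- xs] = [::].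
    exact: ceqv_invalid.
  by elim: xs {u hl} => //= y ys ->.
under eq_map => y do rewrite incl_proj_gen.
rewrite (@flatten_if_pred1 _ _ _ _ (asrc a0)) //; last first.
  by move=> y /andP[_ /= /andP[/andP[/eqP -> _] _]].
move: hl => /= /andP[-> _] /=.
case hP: ((size (a0 :: s) == n.+1) && all (loop_at (asrc a0)) (a0 :: s)).
  exact: feq_refl.
case hv: (cyc C (a0 :: s) && (size (a0 :: s) == n.+1)); last by apply: ceqv_invalid; rewrite hv.
case/andP: hv => hc hs.
case hz: (has zero_arrow (a0 :: s)); first exact: ceqv_has_zero.
by move: hP; rewrite hs (nonzero_cycle_loop hc (negbT hz)).
Qed.

Lemma ceqv_components n (c : hchain C) xs :
  uniq xs -> all (mem xs) (chain_objs c) ->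
  ceqv C n c (flatten [seq incl_chain y (proj_chain y n c) | y <- xs]).
Proof.
move=> u ho.
have incl_proj y : incl_chain y (proj_chain y n c) =
    flatten [seq incl_chain y (proj_gen y n p) | p <- c].
  by rewrite /proj_chain /incl_chain map_flatten -map_comp.
under eq_map => y do rewrite incl_proj.
apply: feq_trans (feq_sym (feq_flatten_exchange _ _ _)).
rewrite -{1}(flatten_seq1 c).
apply: (feq_flatten_in (fun p => all (mem xs) (map asrc p.2))).
  by move: ho; rewrite /chain_objs; elim: (c) => //= p c0 IH; rewrite all_cat => /andP[-> /IH].
by case=> b l /= hl; apply: ceqv_gen_components.
Qed.

Variable i : nat.
Local Notation HHend := (fun y : Ob C => HH (endCat C y) i).

Lemma proj_chain_cycle y c : is_cycle C i c -> is_cycle (endCat C y) i (proj_chain y i c).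
Proof. by move=> H; apply: feq_trans (feq_sym (proj_chain_hd y i c)) (proj_chain_ceqv y H). Qed.

Definition proj_cycle y (a : hcyc C i) : hcyc (endCat C y) i :=
  exist _ (proj_chain y i (sval a)) (@proj_chain_cycle y _ (svalP a)).

Definition HH_components (a : hcyc C i) : seq {y : Ob C & sg_car (HHend y)} :=
  [seq existT _ y (proj_cycle y a) | y <- undup (chain_objs (sval a))].

Lemma HH_components_at y a :
  proj1_sig (dsum_comp _ HHend y (HH_components a)) = proj_chain y i (sval a).
Proof.
have at_z z : flatten (map (@proj1_sig _ _) (dsum_at _ HHend y (existT _ z (proj_cycle z a))))
    = if z == y then proj_chain y i (sval a) else [::].
  case: (z =P y) => [<-|/eqP ne]; first by rewrite dsum_at_eq /= cats0.
  by rewrite dsum_at_ne.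
rewrite sval_dsum_comp /HH_components -map_comp.
under eq_map => z do rewrite /= at_z.
rewrite (@flatten_if_pred1 _ _ _ (pred1 y) y) ?undup_uniq //; last by move=> z /eqP.
rewrite mem_undup /= eqxx andbT; case: ifP => // hn.
by rewrite proj_chain_notin // hn.
Qed.

Lemma HH_components_eqv a a' :
  sg_eqv (HH C i) a a' -> sg_eqv (dsum HHend) (HH_components a) (HH_components a').
Proof.
move=> [b' H] y; exists (proj_chain y i.+1 b').
rewrite !HH_components_at -proj_chain_fneg -proj_chain_cat.
exact: feq_trans (proj_chain_ceqv y H) (proj_chain_hd y i.+1 b').
Qed.

Lemma HH_components_add a a' :
  sg_eqv (dsum HHend) (HH_components (sg_add (HH C i) a a'))
    (sg_add (dsum HHend) (HH_components a) (HH_components a')).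
Proof.
move=> y; apply: HH_eqv_ceqv.
by rewrite sval_dsum_comp_cat !HH_components_at /= proj_chain_cat; exact: feq_refl.
Qed.

Lemma HH_components_inj a a' :
  sg_eqv (dsum HHend) (HH_components a) (HH_components a') -> sg_eqv (HH C i) a a'.
Proof.
move=> H; set xs := undup (chain_objs (sval a) ++ chain_objs (sval a')).
have mem_xs c : {subset chain_objs c <= chain_objs (sval a) ++ chain_objs (sval a')} ->
    all (mem xs) (chain_objs c).
  by move=> sub; apply/allP => o /sub; rewrite /= mem_undup.
have [B HB] : exists B, ceqv C i
    (flatten [seq incl_chain y (proj_chain y i (sval a) ++ fneg (proj_chain y i (sval a')))
              | y <- xs]) (hd C i.+1 B).
  elim: (xs) => [|y ys [B IH]]; first by exists [::]; apply: feq_refl.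
  have [b' Hb] := H y; rewrite !HH_components_at in Hb.
  exists (incl_chain y b' ++ B); rewrite /= hd_cat hd_incl; apply: feq_cat => //.
  exact: incl_chain_ceqv.
exists B; apply: feq_trans HB.
have dec c : {subset chain_objs c <= chain_objs (sval a) ++ chain_objs (sval a')} ->
    ceqv C i c (flatten [seq incl_chain y (proj_chain y i c) | y <- xs]).
  by move=> sub; apply: ceqv_components; [exact: undup_uniq|exact: mem_xs].
apply: feq_trans (feq_cat (dec _ _) (feq_fneg (dec _ _))) _.
- by move=> o ho; rewrite mem_cat ho.
- by move=> o ho; rewrite mem_cat ho orbT.
rewrite fneg_flatten; apply: feq_trans (feq_sym (feq_flatten_interleave _ _ _)) _.
by apply: feq_flatten => y; rewrite incl_chain_cat incl_chain_fneg; exact: feq_refl.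
Qed.

Lemma HH_components_surj s : exists a, sg_eqv (dsum HHend) (HH_components a) s.
Proof.
set c := flatten [seq incl_chain (tag e) (sval (tagged e)) | e <- s].
have hc : is_cycle C i c.
  rewrite /is_cycle /c hd_flatten -map_comp; apply: feq_flatten0 => e /=.
  by rewrite hd_incl; exact: (incl_chain_ceqv (tag e) (svalP (tagged e))).
exists (exist _ c hc) => y; apply: HH_eqv_ceqv.
rewrite HH_components_at sval_dsum_comp /c proj_chain_flatten -map_comp.
apply: feq_flatten => -[z v] /=.
case: (z =P y) => [<-|/eqP ne]; first by rewrite dsum_at_eq /= cats0; exact: proj_incl_chain_ceqv.
by rewrite dsum_at_ne // proj_incl_chain_ne //; exact: feq_refl.
Qed.

Lemma HH_dsum_iso : sg_iso (HH C i) (dsum HHend).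
Proof.
exists HH_components; split; [exact: HH_components_eqv|split; [exact: HH_components_add|]].
by split; [exact: HH_components_inj|exact: HH_components_surj].
Qed.

End UpperTriangular.
End Endomorphisms.

Theorem lemma4p1 (C : linCat) (hC : upper_triangular C) (i : nat) :
  sg_iso (HH C i) (dsum (fun x : Ob C => HH (endCat C x) i)).
Proof.
case: hC => le [le_refl [le_anti [le_trans le_nonzero]]].
exact: (@HH_dsum_iso C le le_refl le_anti le_trans le_nonzero i).
Qed.
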